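(* Let $H=(V,E)$ be a hypergraph with at least $3$ edges and let $L=\mathcal L(H)$ be its intersection graph. (1) If $H$ is eulerian, then $L$ has a Hamilton cycle. (2) If $H$ is quasi-eulerian, then $L$ has a spanning subgraph each of whose connected components is $1$-regular or $2$-regular. (3) If $H$ has an Euler family containing no closed strict trail of length less than $3$, then $L$ has a $2$-factor.
   Context: A hypergraph $H=(V,E)$ consists of a finite nonempty vertex set $V$, a finite edge set $E$ disjoint from $V$, and an incidence function assigning to each edge $e\in E$ a subset of $V$ (also denoted $e$); distinct edges may have the same vertex set. Hypergraphs are assumed to have no empty edges. A walk of length $k$ is a sequence $W=v_0e_1v_1e_2\cdots e_kv_k$ with $v_i\in V$, $e_i\in E$, such that for each $i$, $v_{i-1}\ne v_i$ and $v_{i-1},v_i\in e_i$; the $v_i$ are its anchors. $W$ is closed if $k\ge 2$ and $v_0=v_k$; it is a strict trail if $e_1,\dots,e_k$ are pairwise distinct. An Euler tour of $H$ is a closed strict trail traversing every edge of $H$; an Euler family of $H$ is a family of closed strict trails such that every edge of $H$ lies in exactly one trail and no two trails have a common anchor. $H$ is eulerian (quasi-eulerian) if it has an Euler tour (Euler family). The intersection graph $\mathcal L(H)$ is the simple graph with vertex set $E$ in which distinct $e,e'$ are adjacent iff $e\cap e'\ne\emptyset$. *)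

From mathcomp Require Import all_boot.
Set Implicit Arguments. Unset Strict Implicit. Unset Printing Implicit Defensive.

(* A hypergraph is given by a vertex finType V, an edge finType E and an
   incidence function inc : E -> {set V} (distinct edges may share vertex sets).
   Nonemptiness of V and of each edge are hypotheses of the theorem. *)

Section Hyper.
Variables (V E : finType) (inc : E -> {set V}).

(* A walk v0 e1 v1 ... ek vk is represented by (v0, [:: (e1,v1); ...; (ek,vk)]). *)
Definition walk := (V * seq (E * V))%type.

Fixpoint walk_steps_ok (v0 : V) (s : seq (E * V)) : bool :=
  match s with
  | [::] => true
  | (e, v) :: s' => [&& v0 != v, v0 \in inc e, v \in inc e & walk_steps_ok v s']
  end.

Definition is_walk (W : walk) : bool := walk_steps_ok W.1 W.2.
Definition walk_length (W : walk) : nat := size W.2.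
Definition walk_edges (W : walk) : seq E := map fst W.2.
Definition anchors (W : walk) : seq V := W.1 :: map snd W.2.

Definition is_closed (W : walk) : bool :=
  (2 <= walk_length W) && (last W.1 (map snd W.2) == W.1).
Definition is_strict_trail (W : walk) : bool := uniq (walk_edges W).

Definition closed_strict_trail (W : walk) : bool :=
  [&& is_walk W, is_closed W & is_strict_trail W].

Definition euler_tour (W : walk) : Prop :=
  closed_strict_trail W /\ forall e : E, e \in walk_edges W.

Definition eulerian : Prop := exists W, euler_tour W.

Definition euler_family (F : seq walk) : Prop :=
  [/\ all closed_strict_trail F,
      (forall e : E, count (fun W => e \in walk_edges W) F = 1) &
      pairwise (fun W1 W2 => ~~ has (fun v => v \in anchors W2) (anchors W1)) F].

Definition quasi_eulerian : Prop := exists F, euler_family F.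

Definition igraph : rel E := fun e e' => (e != e') && (inc e :&: inc e' != set0).
End Hyper.

Section Graphs.
Variable (T : finType).

Definition hamilton_cycle (g : rel T) (c : seq T) : Prop :=
  [/\ uniq c, (forall x : T, x \in c) & cycle g c].

Definition spanning_subgraph (F g : rel T) : Prop :=
  symmetric F /\ (forall x y, F x y -> g x y).

Definition degree (F : rel T) (x : T) : nat := #|[set y | F x y]|.

Definition components_1_or_2_regular (F : rel T) : Prop :=
  forall x : T, (forall y, connect F x y -> degree F y = 1)
             \/ (forall y, connect F x y -> degree F y = 2).

Definition two_factor (F g : rel T) : Prop :=
  spanning_subgraph F g /\ forall x : T, degree F x = 2.
End Graphs.

(* The edges of a closed strict trail, in order, are pairwise distinct and
   cyclically consecutive ones share an anchor, so they form a cycle of the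
   intersection graph; for an Euler tour this cycle is Hamiltonian.  For an
   Euler family, joining every edge to its two cyclic neighbours in its own
   trail gives a spanning subgraph whose components are exactly the trails:
   a trail of length 2 becomes a single edge (1-regular), a longer one a cycle
   (2-regular).  If no trail has length 2, this subgraph is a 2-factor. *)

From mathcomp Require Import all_boot.
Set Implicit Arguments. Unset Strict Implicit. Unset Printing Implicit Defensive.

Section CyclicNeighbours.
Variable T : eqType.
Implicit Types (s t : seq T) (x y : T).

Lemma prev_at_notin x y t : x \notin t -> prev_at x x y t = last y t.
Proof.
elim: t y => [|z t IH] y /=; first by rewrite eqxx.
by rewrite inE negb_or => /andP[/negbTE -> /IH].
Qed.

Lemma next_prev_rot_to s x : uniq s -> x \in s ->
  exists t, [/\ uniq (x :: t), size (x :: t) = size s,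
               next s x = head x t & prev s x = last x t].
Proof.
move=> us xs; case: (rot_to xs) => i t def_t.
have ut : uniq (x :: t) by rewrite -def_t rot_uniq.
exists t; split => //; first by rewrite -def_t size_rot.
  by rewrite -(next_rot i us) def_t /=; case: t {def_t ut} => [|y t] /=; rewrite eqxx.
rewrite -(prev_rot i us) def_t /=; move: ut => /= /andP[xt _].
by rewrite prev_at_notin.
Qed.

Lemma next_neq s x : uniq s -> x \in s -> 1 < size s -> next s x != x.
Proof.
move=> us xs; have [t [ut <- -> _]] := next_prev_rot_to us xs.
case: t ut => [|y t] //= /andP[]; rewrite inE negb_or eq_sym.
by case/andP.
Qed.

Lemma prev_neq s x : uniq s -> x \in s -> 1 < size s -> prev s x != x.
Proof.
move=> us xs s_gt1; apply/eqP => def_x.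
have := next_neq us (etrans (mem_prev s x) xs) s_gt1.
by rewrite next_prev // def_x eqxx.
Qed.

Lemma next_eq_prev_size2 s x : uniq s -> x \in s -> size s = 2 ->
  next s x = prev s x.
Proof.
move=> us xs; have [t [_ <- -> ->]] := next_prev_rot_to us xs.
by case: t => [|y [|z t]].
Qed.

Lemma next_neq_prev s x : uniq s -> x \in s -> 2 < size s -> next s x != prev s x.
Proof.
move=> us xs; have [t [ut <- -> ->]] := next_prev_rot_to us xs.
case: t ut => [|y [|z t]] //= /and3P[_ yNzt _] _.
by apply: contraNneq yNzt => ->; rewrite mem_last.
Qed.

Definition cyclic_adj s x y := (x \in s) && ((y == next s x) || (y == prev s x)).

Lemma cyclic_adj_sym s : uniq s -> symmetric (cyclic_adj s).
Proof.
move=> us; suff adjC x y : cyclic_adj s x y -> cyclic_adj s y x.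
  by move=> x y; apply/idP/idP; apply: adjC.
case/andP=> xs /orP[]/eqP->; rewrite /cyclic_adj.
  by rewrite mem_next xs prev_next ?eqxx ?orbT.
by rewrite mem_prev xs next_prev ?eqxx.
Qed.

Lemma cyclic_adj_mem s x y : cyclic_adj s x y -> y \in s.
Proof. by case/andP=> xs /orP[]/eqP->; rewrite ?mem_next ?mem_prev. Qed.

End CyclicNeighbours.

Lemma card_cyclic_adj (T : finType) (s : seq T) x :
    uniq s -> x \in s -> 1 < size s ->
  #|[set y | cyclic_adj s x y]| = if size s == 2 then 1 else 2.
Proof.
move=> us xs s_gt1.
have -> : [set y | cyclic_adj s x y] = [set next s x; prev s x].
  by apply/setP => y; rewrite !inE /cyclic_adj xs.
case: eqP => [s2|s_neq2].
  by rewrite (next_eq_prev_size2 us xs s2) setUid cards1.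
rewrite cards2 next_neq_prev //.
by rewrite ltn_neqAle eq_sym s_gt1 andbT; apply/eqP.
Qed.

Lemma count_eq1_inj (T : eqType) (p : pred T) s a b :
  count p s = 1 -> a \in s -> b \in s -> p a -> p b -> a = b.
Proof.
elim: s => [|c s IH] //=; rewrite !inE.
case pc: (p c) => /=.
  move=> /eqP; rewrite add1n eqSS eqn0Ngt -has_count => /hasPn pNs.
  move=> /orP[/eqP->|a_s] /orP[/eqP->|b_s] pa pb //.
  - by have := pNs b b_s; rewrite pb.
  - by have := pNs a a_s; rewrite pa.
  - by have := pNs a a_s; rewrite pa.
move=> cnt /orP[/eqP->|a_s] /orP[/eqP->|b_s] pa pb; try by rewrite pc in pa pb *.
exact: IH.
Qed.

Section IntersectionGraph.
Variables (V E : finType) (inc : E -> {set V}).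

Definition edges_meet (e f : E) := inc e :&: inc f != set0.

Lemma igraphE e f : igraph inc e f = (e != f) && edges_meet e f.
Proof. by []. Qed.

Lemma edges_meetP e f v : v \in inc e -> v \in inc f -> edges_meet e f.
Proof. by move=> ve vf; apply/set0Pn; exists v; rewrite inE ve vf. Qed.

Lemma walk_steps_path v e w s : walk_steps_ok inc v ((e, w) :: s) ->
  path edges_meet e (map fst s) && (last w (map snd s) \in inc (last e (map fst s))).
Proof.
elim: s v e w => [|[e2 w2] s IH] v e w /=.
  by rewrite andbT => /and3P[_ _ ->].
move=> /and4P[_ _ we /and4P[ww2 we2 w2e2 ok_s]].
have /= := IH w e2 w2; rewrite ww2 we2 w2e2 ok_s => /(_ isT)/andP[-> ->].
by rewrite andbT (edges_meetP we we2).
Qed.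

Lemma closed_trail_cycle W : closed_strict_trail inc W ->
  cycle edges_meet (walk_edges W).
Proof.
case: W => v0 [|[e1 w1] s] /and3P[/= ok /andP[_ /eqP closed] _] //.
rewrite /walk_edges /= rcons_path; rewrite /is_walk /= in ok closed.
have /andP[-> last_inc] := walk_steps_path ok; rewrite /= closed in last_inc.
by move: ok => /and4P[_ v0e1 _ _]; apply: edges_meetP last_inc v0e1.
Qed.

Lemma closed_trail_uniq W : closed_strict_trail inc W -> uniq (walk_edges W).
Proof. by case/and3P. Qed.

Lemma closed_trail_size W : closed_strict_trail inc W -> 1 < size (walk_edges W).
Proof. by case/and3P=> _ /andP[]; rewrite size_map. Qed.

Lemma closed_trail_igraph_next_prev W x :
    closed_strict_trail inc W -> x \in walk_edges W ->
  igraph inc x (next (walk_edges W) x) && igraph inc x (prev (walk_edges W) x).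
Proof.
move=> trW xW; have cyW := closed_trail_cycle trW.
have uW := closed_trail_uniq trW; have W_gt1 := closed_trail_size trW.
rewrite !igraphE (next_cycle cyW xW) eq_sym (next_neq uW xW W_gt1).
rewrite eq_sym (prev_neq uW xW W_gt1) /= /edges_meet setIC.
exact: prev_cycle cyW xW.
Qed.

Lemma closed_trail_cyclic_adj W x y : closed_strict_trail inc W ->
  cyclic_adj (walk_edges W) x y -> igraph inc x y.
Proof.
move=> trW /andP[xW /orP[]/eqP->];
  by case/andP: (closed_trail_igraph_next_prev trW xW).
Qed.

Lemma euler_tour_hamilton W : euler_tour inc W ->
  hamilton_cycle (igraph inc) (walk_edges W).
Proof.
move=> [trW allW]; have uW := closed_trail_uniq trW; split=> //.
apply: cycle_from_next uW _ => x xW.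
by case/andP: (closed_trail_igraph_next_prev trW xW).
Qed.

Definition family_graph (Fam : seq (walk V E)) : rel E :=
  fun x y => has (fun W => cyclic_adj (walk_edges W) x y) Fam.

Section EulerFamily.
Variable Fam : seq (walk V E).
Hypothesis famE : euler_family inc Fam.

Lemma family_trail W : W \in Fam -> closed_strict_trail inc W.
Proof. by case: famE => /allP trF _ _; apply: trF. Qed.

Lemma family_trail_of x : exists2 W, W \in Fam & x \in walk_edges W.
Proof. by case: famE => _ cnt _; apply/hasP; rewrite has_count cnt. Qed.

Lemma family_trail_uniq x W W' : W \in Fam -> W' \in Fam ->
  x \in walk_edges W -> x \in walk_edges W' -> W = W'.
Proof. by case: famE => _ cnt _; apply: count_eq1_inj (cnt x). Qed.

Lemma family_graphE x W y : W \in Fam -> x \in walk_edges W ->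
  family_graph Fam x y = cyclic_adj (walk_edges W) x y.
Proof.
move=> WF xW; apply/hasP/idP => [[W' W'F adj]|]; last by exists W.
by rewrite (family_trail_uniq WF W'F xW) //; case/andP: adj.
Qed.

Lemma family_graph_spanning : spanning_subgraph (family_graph Fam) (igraph inc).
Proof.
split=> [x y|x y /hasP[W WF adj]].
  apply: eq_in_has => W WF.
  exact: cyclic_adj_sym (closed_trail_uniq (family_trail WF)) x y.
exact: closed_trail_cyclic_adj (family_trail WF) adj.
Qed.

Lemma degree_family_graph x W : W \in Fam -> x \in walk_edges W ->
  degree (family_graph Fam) x = if size (walk_edges W) == 2 then 1 else 2.
Proof.
move=> WF xW; have trW := family_trail WF.
rewrite /degree -(card_cyclic_adj (closed_trail_uniq trW) xW (closed_trail_size trW)).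
by apply: eq_card => y; rewrite !inE (family_graphE _ WF xW).
Qed.

Lemma family_graph_connect x W y : W \in Fam -> x \in walk_edges W ->
  connect (family_graph Fam) x y -> y \in walk_edges W.
Proof.
move=> WF xW /connectP[p xp ->]; elim: p x xW xp => [|z p IH] x xW //=.
case/andP=> xz zp; apply: IH zp.
by rewrite (family_graphE _ WF xW) in xz; apply: cyclic_adj_mem xz.
Qed.

Lemma family_graph_components : components_1_or_2_regular (family_graph Fam).
Proof.
move=> x; have [W WF xW] := family_trail_of x.
have degW y := degree_family_graph WF (family_graph_connect WF xW y).
by case: eqP degW => _ degW; [left|right] => y /degW.
Qed.

End EulerFamily.

End IntersectionGraph.

Theorem theorem2p12 (V E : finType) (inc : E -> {set V})
  (hV : 0 < #|V|) (hne : forall e : E, inc e != set0) (h3 : 2 < #|E|) :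
  [/\ eulerian inc -> exists c : seq E, hamilton_cycle (igraph inc) c,
      quasi_eulerian inc ->
        exists F : rel E, spanning_subgraph F (igraph inc) /\ components_1_or_2_regular F
    & (exists Fam : seq (walk V E),
         euler_family inc Fam /\ all (fun W => 3 <= walk_length W) Fam) ->
        exists F : rel E, two_factor F (igraph inc)].
Proof.
split.
- by move=> [W tourW]; exists (walk_edges W); apply: euler_tour_hamilton.
- move=> [Fam famE]; exists (family_graph Fam).
  by split; [exact: family_graph_spanning famE | exact: family_graph_components famE].
- move=> [Fam [famE longF]]; exists (family_graph Fam).
  split=> [|x]; first exact: family_graph_spanning famE.
  have [W WF xW] := family_trail_of famE x.
  rewrite (degree_family_graph famE WF xW).
  have := allP longF W WF; rewrite /walk_length -(size_map fst).
  by case: eqP => // ->.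
Qed.
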